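(* Let $G\subseteq \mathrm{GL}(N)$ be a quadratic matrix Lie group with reductive Lie algebra $\mathfrak{g}$, and $B:\mathfrak{g}\to\mathfrak{g}$ smooth. Consider the canonical Hamiltonian system on $T^*G$ (points written as pairs of $N\times N$ matrices $(g,p)$) $$\dot g=g\,B(g^\dagger p)^\dagger,\qquad \dot p=-p\,B(g^\dagger p),$$ and apply an $s$-stage SDIRK method with weights $b_i$, step $h$, $h_i=hb_i$, written as follows: with $g_{n,r_0}=g_n$, $p_{n,r_0}=p_n$, for $i=1,\dots,s$ the stage slopes $k^g_{n,i},k^p_{n,i}$ satisfy $$k^g_{n,i}=\Big(g_{n,r_{i-1}}+\tfrac{h_i}{2}k^g_{n,i}\Big)B(\mu_{n,c_i})^\dagger,\qquad k^p_{n,i}=-\Big(p_{n,r_{i-1}}+\tfrac{h_i}{2}k^p_{n,i}\Big)B(\mu_{n,c_i}),$$ $$\mu_{n,c_i}=\Big(g_{n,r_{i-1}}+\tfrac{h_i}{2}k^g_{n,i}\Big)^{\dagger}\Big(p_{n,r_{i-1}}+\tfrac{h_i}{2}k^p_{n,i}\Big),$$ and $g_{n,r_i}=g_{n,r_{i-1}}+h_ik^g_{n,i}$, $p_{n,r_i}=p_{n,r_{i-1}}+h_ik^p_{n,i}$, $g_{n+1}=g_{n,r_s}$, $p_{n+1}=p_{n,r_s}$. Write $B_i=B(\mu_{n,c_i})$ and assume $\mathrm{Id}\pm\tfrac{h_i}{2}B_i$ are invertible. Then $$g_{n,r_i}=g_{n,r_{i-1}}\,\mathrm{cay}(h_iB_i^\dagger),\qquad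 p_{n,r_i}=p_{n,r_{i-1}}\,\mathrm{cay}(h_iB_i)^{-1},$$ hence $g_{n+1}=g_n\prod_{i=1}^s\mathrm{cay}(h_iB_i^\dagger)$ and $p_{n+1}=p_n\prod_{i=1}^s\mathrm{cay}(h_iB_i)^{-1}$. Moreover, with $\mu_{n,r_i}:=g_{n,r_i}^\dagger p_{n,r_i}$, $$\mu_{n,r_i}=\mathrm{cay}(h_iB_i)\,\mu_{n,r_{i-1}}\,\mathrm{cay}(h_iB_i)^{-1},\qquad \mu_{n,c_i}=\Big(\mathrm{Id}-\tfrac{h_i}{2}B_i\Big)^{-1}\mu_{n,r_{i-1}}\Big(\mathrm{Id}+\tfrac{h_i}{2}B_i\Big)^{-1},$$ so that $\mu_{n,r_{i-1}}=(\mathrm{Id}-\tfrac{h_i}{2}B_i)\mu_{n,c_i}(\mathrm{Id}+\tfrac{h_i}{2}B_i)$ and $\mu_{n,r_i}=(\mathrm{Id}+\tfrac{h_i}{2}B_i)\mu_{n,c_i}(\mathrm{Id}-\tfrac{h_i}{2}B_i)$. Also $\mu_{n,c_i}=g_{n,c_i}^\dagger p_{n,c_i}$ with $g_{n,c_i}=\tfrac12(g_{n,r_{i-1}}+g_{n,r_i})$ and $p_{n,c_i}=\tfrac12(p_{n,r_{i-1}}+p_{n,r_i})$.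
   Context: $\dagger$ denotes conjugate transpose; $\mathrm{cay}(\xi)=(\mathrm{Id}-\xi/2)^{-1}(\mathrm{Id}+\xi/2)$. A quadratic matrix Lie group is $G\subseteq\mathrm{GL}(N)$ defined by a quadratic relation with a fixed matrix $J$ (e.g. $\mathrm{O}(n)$, $\mathrm{SO}(n)$, $\mathrm{Sp}(2N)$); its Lie algebra elements satisfy $J\xi+\xi^\dagger J=0$. Reductive means $[\mathfrak{g}^\dagger,\mathfrak{g}]\subset\mathfrak{g}$. The Hamiltonian system above is the reconstruction of the Lie–Poisson system $\dot\mu=[B(\mu),\mu]$, $B=\nabla H^\dagger$, via the momentum map $\mu=g^\dagger p$. An $s$-stage SDIRK has $a_{ij}=b_j$ ($j<i$), $a_{ii}=b_i/2$, $a_{ij}=0$ ($j>i$), weights $b_i$ with $\sum b_i=1$. *)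

(* Matrices over a numeric algebraically closed field C
   (e.g. algC), with Num.conj as complex conjugation. Size N = n.+1. *)
From mathcomp Require Import all_boot all_order all_algebra.
Set Implicit Arguments. Unset Strict Implicit. Unset Printing Implicit Defensive.
Import GRing.Theory Num.Theory.
Local Open Scope ring_scope.

Section Defs.
Variables (C : numClosedFieldType) (n : nat).
Local Notation M := 'M[C]_n.+1.

Definition dag (A : M) : M := (map_mx Num.conj A)^T.

Definition cay (xi : M) : M := invmx (1%:M - 2^-1 *: xi) *m (1%:M + 2^-1 *: xi).

Definition quad_group (J g : M) : Prop := dag g *m J *m g = J /\ g \in unitmx.
Definition lie_alg (J xi : M) : Prop := J *m xi + dag xi *m J = 0.
Definition reductive (J : M) : Prop :=
  forall x y, lie_alg J x -> lie_alg J y -> lie_alg J (dag x *m y - y *m dag x).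

(* SDIRK stage data: stage index i in 1..s; gr, pr : stage values g_{n,r_i},
   p_{n,r_i} (index 0 = g_n, p_n); kg, kp : stage slopes. *)
Definition hstage (h : C) (b : nat -> C) (i : nat) : C := h * b i.
Definition gstar h b (gr kg : nat -> M) i : M := gr i.-1 + (hstage h b i / 2) *: kg i.
Definition pstar h b (pr kp : nat -> M) i : M := pr i.-1 + (hstage h b i / 2) *: kp i.
Definition muc h b (gr kg pr kp : nat -> M) i : M :=
  dag (gstar h b gr kg i) *m pstar h b pr kp i.
Definition mur (gr pr : nat -> M) i : M := dag (gr i) *m pr i.
End Defs.

(** With [a = h_i/2], the two implicit stage equations say that the stage
    midpoints [G = g + a k^g] and [P = p + a k^p] satisfy
    [g_{r_{i-1}} = G (1 - a B_i^dag)], [g_{r_i} = G (1 + a B_i^dag)],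
    [p_{r_{i-1}} = P (1 + a B_i)] and [p_{r_i} = P (1 - a B_i)].
    Eliminating [G] and [P] gives the Cayley-transform updates, and since
    [h_i] is real the [dag] of [1 -+ a B_i^dag] is [1 -+ a B_i], so
    [mu_{r_{i-1}}] and [mu_{r_i}] are [mu_{c_i} = G^dag P] multiplied on both
    sides by these commuting factors. *)

From mathcomp Require Import all_boot all_order all_algebra.
Set Implicit Arguments. Unset Strict Implicit. Unset Printing Implicit Defensive.
Import GRing.Theory Num.Theory.
Local Open Scope ring_scope.

Section ConjugateTranspose.
Variables (C : numClosedFieldType) (n : nat).
Local Notation M := 'M[C]_n.+1.
Implicit Types A B : M.

Lemma dagM A B : dag (A *m B) = dag B *m dag A.
Proof. by rewrite /dag map_mxM trmx_mul. Qed.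

Lemma dagD A B : dag (A + B) = dag A + dag B.
Proof. by rewrite /dag map_mxD linearD. Qed.

Lemma dagN A : dag (- A) = - dag A.
Proof. by rewrite /dag map_mxN linearN. Qed.

Lemma dagB A B : dag (A - B) = dag A - dag B.
Proof. by rewrite dagD dagN. Qed.

Lemma dagZ (c : C) A : dag (c *: A) = Num.conj c *: dag A.
Proof. by rewrite /dag map_mxZ linearZ. Qed.

Lemma dag1 : dag (1%:M : M) = 1%:M.
Proof. by rewrite /dag map_mx1 trmx1. Qed.

Lemma dagK : involutive (@dag C n).
Proof. by move=> A; apply/matrixP=> i j; rewrite !mxE conjCK. Qed.

Lemma dag_unitmx A : (dag A \in unitmx) = (A \in unitmx).
Proof. by rewrite /dag unitmx_tr map_unitmx. Qed.

Lemma dag_1DZ_real (c : C) A : c \is Num.real ->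
  dag (1%:M + c *: dag A) = 1%:M + c *: A.
Proof. by move=> /conj_Creal cR; rewrite dagD dag1 dagZ cR dagK. Qed.

Lemma dag_1BZ_real (c : C) A : c \is Num.real ->
  dag (1%:M - c *: dag A) = 1%:M - c *: A.
Proof. by move=> /conj_Creal cR; rewrite dagB dag1 dagZ cR dagK. Qed.

End ConjugateTranspose.

Lemma comm_mx_1D_1B (R : pzRingType) (n : nat) (X : 'M[R]_n) :
  comm_mx (1%:M + X) (1%:M - X).
Proof.
apply: comm_mxB; first exact: comm_mx1.
by apply/comm_mx_sym/comm_mxD; [exact: comm_mx1 | exact: comm_mx_refl].
Qed.

Section Cayley.
Variables (C : numClosedFieldType) (n : nat).
Local Notation M := 'M[C]_n.+1.

Lemma cayZ (c : C) (X : M) :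
  cay (c *: X) = invmx (1%:M - (c / 2) *: X) *m (1%:M + (c / 2) *: X).
Proof. by rewrite /cay !scalerA mulrC. Qed.

Lemma invmx_cayZ (c : C) (X : M) :
  1%:M - (c / 2) *: X \in unitmx -> 1%:M + (c / 2) *: X \in unitmx ->
  invmx (cay (c *: X)) = invmx (1%:M + (c / 2) *: X) *m (1%:M - (c / 2) *: X).
Proof.
move=> uW uV; rewrite cayZ.
by rewrite -[invmx (_ *m _)]/((_ * _)^-1) invrM ?unitrV // invrK.
Qed.

End Cayley.

(** The implicit midpoint rule for the linear field [y' = y A]: the stage
    value [Y] factors both endpoints of the step. *)
Lemma implicit_midpoint_linear (R : numFieldType) (n : nat)
    (c : R) (A y0 y1 Y k : 'M[R]_n.+1) :
  Y = y0 + (c / 2) *: k -> k = Y *m A -> y1 = y0 + c *: k ->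
  y0 = Y *m (1%:M - (c / 2) *: A) /\ y1 = Y *m (1%:M + (c / 2) *: A).
Proof.
move=> YE kE y1E; rewrite mulmxBr mulmxDr mulmx1 -!scalemxAr -kE YE addrK.
by rewrite y1E -addrA -scalerDl -splitr.
Qed.

Lemma midpoint_sum (R : numFieldType) (n : nat) (A Y : 'M[R]_n.+1) :
  2^-1 *: (Y *m (1%:M - A) + Y *m (1%:M + A)) = Y.
Proof.
rewrite -mulmxDr addrACA addNr addr0 mulmxDr mulmx1.
by rewrite -{1 2}[Y]scale1r -scalerDl scalerA mulVf ?scale1r // pnatr_eq0.
Qed.

Section CayleyStage.
Variables (C : numClosedFieldType) (n : nat).
Local Notation M := 'M[C]_n.+1.
Variables (hi : C) (X G P g0 g1 p0 p1 : M).
Local Notation W := (1%:M - (hi / 2) *: X).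
Local Notation V := (1%:M + (hi / 2) *: X).

Hypotheses (hi_real : hi \is Num.real) (W_unit : W \in unitmx) (V_unit : V \in unitmx).
Hypotheses (g0E : g0 = G *m (1%:M - (hi / 2) *: dag X))
           (g1E : g1 = G *m (1%:M + (hi / 2) *: dag X))
           (p0E : p0 = P *m V) (p1E : p1 = P *m W).

Let half_real : hi / 2 \is Num.real.
Proof. by rewrite realM ?realV ?realn. Qed.

Lemma stage_g_cay : g1 = g0 *m cay (hi *: dag X).
Proof.
have dagW_unit : 1%:M - (hi / 2) *: dag X \in unitmx.
  by rewrite -dag_unitmx dag_1BZ_real.
by rewrite cayZ mulmxA g0E mulmxK.
Qed.

Lemma stage_p_invcay : p1 = p0 *m invmx (cay (hi *: X)).
Proof. by rewrite invmx_cayZ // mulmxA p0E mulmxK. Qed.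

Lemma stage_mur_prev : dag g0 *m p0 = W *m (dag G *m P) *m V.
Proof. by rewrite g0E p0E dagM dag_1BZ_real // !mulmxA. Qed.

Lemma stage_mur : dag g1 *m p1 = V *m (dag G *m P) *m W.
Proof. by rewrite g1E p1E dagM dag_1DZ_real // !mulmxA. Qed.

Lemma stage_muc : dag G *m P = invmx W *m (dag g0 *m p0) *m invmx V.
Proof. by rewrite stage_mur_prev !mulmxA mulVmx // mul1mx mulmxK. Qed.

Lemma stage_mur_cay :
  dag g1 *m p1 = cay (hi *: X) *m (dag g0 *m p0) *m invmx (cay (hi *: X)).
Proof.
rewrite invmx_cayZ // cayZ stage_mur_prev !mulmxA (mulmxK V_unit).
by rewrite -(mulmxA (invmx W)) comm_mx_1D_1B mulKmx // stage_mur !mulmxA.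
Qed.

Lemma stage_muc_midpoint :
  dag G *m P = dag (2^-1 *: (g0 + g1)) *m (2^-1 *: (p0 + p1)).
Proof.
have -> : 2^-1 *: (g0 + g1) = G by rewrite g0E g1E midpoint_sum.
by rewrite p0E p1E addrC midpoint_sum.
Qed.

End CayleyStage.

Lemma sdirk_stage_cayley (C : numClosedFieldType) (n : nat) (hi : C)
    (X g0 g1 p0 p1 G P kg kp : 'M[C]_n.+1) :
  hi \is Num.real ->
  1%:M - (hi / 2) *: X \in unitmx -> 1%:M + (hi / 2) *: X \in unitmx ->
  G = g0 + (hi / 2) *: kg -> kg = G *m dag X -> g1 = g0 + hi *: kg ->
  P = p0 + (hi / 2) *: kp -> kp = - (P *m X) -> p1 = p0 + hi *: kp ->
  [/\ g1 = g0 *m cay (hi *: dag X),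
      p1 = p0 *m invmx (cay (hi *: X)) &
      dag g1 *m p1 = cay (hi *: X) *m (dag g0 *m p0) *m invmx (cay (hi *: X))] /\
  [/\ dag G *m P = invmx (1%:M - (hi / 2) *: X) *m (dag g0 *m p0)
                     *m invmx (1%:M + (hi / 2) *: X),
      dag g0 *m p0 = (1%:M - (hi / 2) *: X) *m (dag G *m P) *m (1%:M + (hi / 2) *: X),
      dag g1 *m p1 = (1%:M + (hi / 2) *: X) *m (dag G *m P) *m (1%:M - (hi / 2) *: X) &
      dag G *m P = dag (2^-1 *: (g0 + g1)) *m (2^-1 *: (p0 + p1))].
Proof.
move=> hiR uW uV GE kgE g1E PE kpE p1E.
have [g0G g1G] := implicit_midpoint_linear GE kgE g1E.
rewrite -mulmxN in kpE.
have [p0P p1P] := implicit_midpoint_linear PE kpE p1E.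
rewrite scalerN opprK in p0P; rewrite scalerN in p1P.
split; split.
- exact: stage_g_cay g0G g1G.
- exact: stage_p_invcay p0P p1P.
- exact: stage_mur_cay g0G g1G p0P p1P.
- exact: stage_muc g0G p0P.
- exact: stage_mur_prev g0G p0P.
- exact: stage_mur g1G p1P.
- exact: stage_muc_midpoint g0G g1G p0P p1P.
Qed.

Lemma prod_of_recurrence (R : pzRingType) (x f : nat -> R) (s : nat) :
  (forall i, (1 <= i <= s)%N -> x i = x i.-1 * f i) ->
  x s = x 0%N * \prod_(1 <= i < s.+1) f i.
Proof.
elim: s => [|s IHs] step; first by rewrite big_geq // mulr1.
rewrite big_nat_recr //= mulrA -IHs; first by apply: step; rewrite /= leqnn.
by move=> i /andP[i_gt0 i_le_s]; apply: step; rewrite i_gt0 leqW.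
Qed.

Theorem mainTheorem2 (C : numClosedFieldType) (n : nat)
  (J : 'M[C]_n.+1) (B : 'M[C]_n.+1 -> 'M[C]_n.+1)
  (s : nat) (b : nat -> C) (h : C)
  (gr pr kg kp : nat -> 'M[C]_n.+1) :
  (* quadratic matrix Lie group with reductive Lie algebra, B : g -> g *)
  J \in unitmx -> reductive J ->
  (forall xi, lie_alg J xi -> lie_alg J (B xi)) ->
  (* SDIRK weights and real step *)
  (forall i, (1 <= i <= s)%N -> b i \is Num.real) ->
  \sum_(1 <= i < s.+1) b i = 1 ->
  h \is Num.real ->
  (* initial point on T^*G *)
  quad_group J (gr 0%N) ->
  (* the SDIRK stage equations, with B_i = B(mu_{n,c_i}) *)
  (forall i, (1 <= i <= s)%N ->
     let Bi := B (muc h b gr kg pr kp i) in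
     [/\ kg i = gstar h b gr kg i *m dag Bi,
         kp i = - (pstar h b pr kp i *m Bi),
         gr i = gr i.-1 + hstage h b i *: kg i &
         pr i = pr i.-1 + hstage h b i *: kp i]) ->
  (* invertibility of Id +- (h_i/2) B_i *)
  (forall i, (1 <= i <= s)%N ->
     let Bi := B (muc h b gr kg pr kp i) in
     (1%:M - (hstage h b i / 2) *: Bi \in unitmx) /\
     (1%:M + (hstage h b i / 2) *: Bi \in unitmx)) ->
  (forall i, (1 <= i <= s)%N ->
     let hi := hstage h b i in
     let Bi := B (muc h b gr kg pr kp i) in
     let mc := muc h b gr kg pr kp i in
     [/\ gr i = gr i.-1 *m cay (hi *: dag Bi),
         pr i = pr i.-1 *m invmx (cay (hi *: Bi)) &
         mur gr pr i = cay (hi *: Bi) *m mur gr pr i.-1 *m invmx (cay (hi *: Bi))] /\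
     [/\ mc = invmx (1%:M - (hi / 2) *: Bi) *m mur gr pr i.-1
                *m invmx (1%:M + (hi / 2) *: Bi),
         mur gr pr i.-1 = (1%:M - (hi / 2) *: Bi) *m mc *m (1%:M + (hi / 2) *: Bi),
         mur gr pr i = (1%:M + (hi / 2) *: Bi) *m mc *m (1%:M - (hi / 2) *: Bi) &
         mc = dag (2^-1 *: (gr i.-1 + gr i)) *m (2^-1 *: (pr i.-1 + pr i))])
  /\
  gr s = gr 0%N *m \prod_(1 <= i < s.+1) cay (hstage h b i *: dag (B (muc h b gr kg pr kp i)))
  /\
  pr s = pr 0%N *m \prod_(1 <= i < s.+1) invmx (cay (hstage h b i *: B (muc h b gr kg pr kp i))).
Proof.
move=> _ _ _ b_real _ h_real _ stage_eqs stage_units.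
have stages i : (1 <= i <= s)%N -> _ := fun i_s =>
  let: And4 kgE kpE grE prE := stage_eqs i i_s in
  let: conj uW uV := stage_units i i_s in
  sdirk_stage_cayley (realM h_real (b_real i i_s)) uW uV erefl kgE grE erefl kpE prE.
split; first exact: stages.
by split; apply: prod_of_recurrence => i /stages[[]].
Qed.
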